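(* Let $X$ be a topological space whose frame of open sets has a presentation $\mathcal{O}X=\langle G\mid R\rangle$, with quotient frame homomorphism $\overline{q}\colon\mathcal{O}(\Sigma^G)\to\mathcal{O}X$. Give $\mathcal{O}(\Sigma^G)$ and $\mathcal{O}X$ their Scott topologies, and let $\widetilde{\mathrm{ev}}\colon\mathcal{O}(\Sigma^G)\times X\to\Sigma$ be the continuous map with $\widetilde{\mathrm{ev}}(m,x)=\top$ iff $x\in\overline{q}(m)$. Suppose $\overline{q}$ has a continuous section $s\colon\mathcal{O}X\to\mathcal{O}(\Sigma^G)$ (i.e. $\overline{q}\circ s=\mathrm{id}$). Then $\mathcal{O}X$ with the Scott topology, together with the evaluation map $\widetilde{\mathrm{ev}}\circ(s\times X)$ (which sends $(U,x)$ to $\top$ iff $x\in U$), is the exponential $\Sigma^X$ in the category $\mathrm{Top}$ of topological spaces; in particular $X$ is locally compact (i.e. $\mathcal{O}X$ is a continuous lattice).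
   Context: Frames: complete lattices where finite meets distribute over arbitrary joins. $\Sigma$ is Sierpiński space $\{\bot,\top\}$ with open sets $\emptyset,\{\top\},\{\bot,\top\}$. For a set $G$, $\mathcal{O}(\Sigma^G)$ is the free frame on $G$. A presentation $\mathcal{O}X=\langle G\mid R\rangle$ means the frame of opens of $X$ is the quotient of the free frame on $G$ by the congruence generated by the relations $R$, with quotient map $\overline{q}$; a point $x\in X$ ''lies in'' $m\in\mathcal{O}(\Sigma^G)$ iff $x\in\overline{q}(m)$. Scott topology: $V$ is open iff it is an upset and whenever the join of a directed set lies in $V$ some member of the set does. The way-below relation: $a\ll b$ iff whenever $b\le\bigvee D$ for directed $D$, $a\le d$ for some $d\in D$; a lattice is continuous if every $b$ is the directed join of $\{a\mid a\ll b\}$. *)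

From HB Require Import structures.
From Stdlib Require Import List.
From mathcomp Require Import all_boot all_order.
From mathcomp Require Import boolp classical_sets topology.

Set Implicit Arguments.
Unset Strict Implicit.
Unset Printing Implicit Defensive.

Local Open Scope classical_set_scope.

(* Sierpinski space Sigma = {bot, top} is encoded as bool (top = true);
   its open sets are set0, [set true], setT.  A map f : Z -> bool from a
   topological space is continuous into Sigma iff f^-1(top) is open. *)
Definition sigma_continuous (Z : topologicalType) (f : Z -> bool) : Prop :=
  open (f @^-1` [set true]).

(* Open sets of the product space Sigma^G (product topology): the
   elements of the free frame O(Sigma^G).  Basic opens are the sets
   {h | h g = top for all g in F}, F a finite list of generators. *)
Definition SigmaG_open (G : Type) (U : set (G -> bool)) : Prop :=
  forall f, U f -> exists F : list G,
    (forall g, Stdlib.Lists.List.In g F -> f g = true) /\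
    (forall h, (forall g, Stdlib.Lists.List.In g F -> h g = true) -> U h).

Definition directed (T : Type) (D : set (set T)) : Prop :=
  (exists d, D d) /\
  forall a b, D a -> D b -> exists c, [/\ D c, a `<=` c & b `<=` c].

(* Scott-open subsets V of a frame of open sets P (a family of subsets of T
   closed under arbitrary unions, ordered by inclusion, so that joins are
   unions): V is an upset and inaccessible by directed joins. *)
Definition scott_open (T : Type) (P : set (set T)) (V : set (set T)) : Prop :=
  [/\ V `<=` P,
      (forall a b, V a -> P b -> a `<=` b -> V b) &
      (forall D, D `<=` P -> directed D -> V (\bigcup_(d in D) d) ->
         exists2 d, D d & V d)].

Definition frame_hom (G : Type) (X : topologicalType)
  (q : set (G -> bool) -> set X) : Prop :=
  [/\ (forall m, SigmaG_open m -> open (q m)),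
      q setT = setT,
      (forall m m', SigmaG_open m -> SigmaG_open m' ->
         q (m `&` m') = q m `&` q m') &
      (forall M : set (set (G -> bool)), M `<=` @SigmaG_open G ->
         q (\bigcup_(m in M) m) = \bigcup_(m in M) q m)].

Definition SigmaG_congruence (G : Type)
  (C : set (G -> bool) -> set (G -> bool) -> Prop) : Prop :=
  (forall a b, C a b -> SigmaG_open a /\ SigmaG_open b) /\
  [/\ (forall a, SigmaG_open a -> C a a),
      (forall a b, C a b -> C b a),
      (forall a b c, C a b -> C b c -> C a c),
      (forall a b c, C a b -> SigmaG_open c -> C (a `&` c) (b `&` c)) &
      (forall M : set (set (G -> bool) * set (G -> bool)),
         (forall p, M p -> C p.1 p.2) ->
         C (\bigcup_(p in M) p.1) (\bigcup_(p in M) p.2))].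

Definition gen_congruence (G : Type)
  (R : set (set (G -> bool) * set (G -> bool))) (a b : set (G -> bool)) : Prop :=
  forall C, SigmaG_congruence C -> (forall p, R p -> C p.1 p.2) -> C a b.

(* O X = < G | R > with quotient map q : O(Sigma^G) -> O X : q is a
   surjective frame homomorphism whose kernel is the congruence generated
   by the relations R (pairs of elements of the free frame). *)
Definition presentation (G : Type) (R : set (set (G -> bool) * set (G -> bool)))
  (X : topologicalType) (q : set (G -> bool) -> set X) : Prop :=
  [/\ (forall p, R p -> SigmaG_open p.1 /\ SigmaG_open p.2),
      frame_hom q,
      (forall U, open U -> exists2 m, SigmaG_open m & q m = U) &
      (forall a b, SigmaG_open a -> SigmaG_open b ->
         (q a = q b <-> gen_congruence R a b))].

Definition evt (G : Type) (X : topologicalType) (q : set (G -> bool) -> set X)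
  (m : set (G -> bool)) (x : X) : bool := `[< q m x >].

Definition scott_continuous_OX_SigmaG (G : Type) (X : topologicalType)
  (s : set X -> set (G -> bool)) : Prop :=
  forall V, scott_open (@SigmaG_open G) V ->
    scott_open open [set U | open U /\ V (s U)].

Definition ev_continuous (X : topologicalType) (e : set X -> X -> bool) : Prop :=
  forall U x, open U -> e U x ->
    exists V O, [/\ scott_open open V, V U, open O, O x &
      forall U' x', V U' -> O x' -> e U' x'].

Definition scott_continuous_to_OX (Y X : topologicalType) (h : Y -> set X) : Prop :=
  (forall y, open (h y)) /\
  forall V, scott_open open V -> open (h @^-1` V).

Definition is_exponential_Sigma (X : topologicalType) (e : set X -> X -> bool) : Prop :=
  ev_continuous e /\
  forall (Y : topologicalType) (f : Y * X -> bool), sigma_continuous f ->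
    exists h : Y -> set X,
      [/\ scott_continuous_to_OX h,
          (forall y x, e (h y) x = f (y, x)) &
          (forall h' : Y -> set X, scott_continuous_to_OX h' ->
             (forall y x, e (h' y) x = f (y, x)) -> h' = h)].

Definition way_below (X : topologicalType) (V U : set X) : Prop :=
  forall D, D `<=` open -> directed D -> U `<=` \bigcup_(d in D) d ->
    exists2 d, D d & V `<=` d.

Definition continuous_lattice_OX (X : topologicalType) : Prop :=
  forall U : set X, open U ->
    directed [set V | open V /\ way_below V U] /\
    U = \bigcup_(V in [set V | open V /\ way_below V U]) V.

From mathcomp Require Import all_boot all_order.
From mathcomp Require Import boolp classical_sets topology.

Set Implicit Arguments.
Unset Strict Implicit.
Unset Printing Implicit Defensive.

Local Open Scope classical_set_scope.

(* Every open of Sigma^G is a union of basic opens [SigmaG_basic F], and each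
   of these is compact: the opens containing it form a Scott-open set.
   Pulling that set back along the Scott-continuous section s shows that
   q (SigmaG_basic F) is way below every open W with SigmaG_basic F <= s W;
   since q preserves unions and q (s W) = W, these opens cover W, so O X is
   a continuous lattice.  In a continuous lattice the transpose
   y |-> {x | f (y, x)} of a continuous f : Y x X -> Sigma is Scott-continuous
   (an open U way below f(y0, -) is already covered by one tube N x O around
   y0), which is the universal property of the exponential. *)

Section WayBelow.
Variable X : topologicalType.

Lemma way_below0 (U : set X) : way_below set0 U.
Proof. by move=> D _ [[d Dd] _] _; exists d. Qed.

Lemma way_belowU (V V' U : set X) :
  way_below V U -> way_below V' U -> way_below (V `|` V') U.
Proof.
move=> VU V'U D Dop Ddir UD.
have [d Dd Vd] := VU D Dop Ddir UD.
have [d' Dd' V'd'] := V'U D Dop Ddir UD.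
have [c [Dc dc d'c]] := Ddir.2 _ _ Dd Dd'.
by exists c => //; rewrite subUset; split; [exact: subset_trans dc | exact: subset_trans d'c].
Qed.

Lemma way_below_subset (V U : set X) : open U -> way_below V U -> V `<=` U.
Proof.
move=> Uo VU; have [_ -> //] : exists2 d, [set U] d & V `<=` d.
apply: VU => [_ -> // | | x Ux]; last by exists U.
split; first by exists U.
by move=> _ _ -> ->; exists U; split.
Qed.

Lemma continuous_lattice_OX_of_cover :
  (forall U x, open U -> U x -> exists2 V : set X, open V /\ way_below V U & V x) ->
  continuous_lattice_OX X.
Proof.
move=> cover U Uo; split.
- split; first by exists set0; split; [exact: open0 | exact: way_below0].
  move=> V V' [Vo VU] [V'o V'U]; exists (V `|` V'); split => //.
  by split; [exact: openU | exact: way_belowU].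
- apply/seteqP; split => [x /(cover _ _ Uo)[V VU Vx] | x [V [_ VU] Vx]].
    by exists V.
  exact: way_below_subset VU _ Vx.
Qed.

End WayBelow.

Section Transpose.
Variables (Y X : topologicalType) (f : Y * X -> bool).

Definition tube_opens (y : Y) : set (set X) :=
  [set O | open O /\ exists2 N, nbhs y N & N `*` O `<=` f @^-1` [set true]].

Lemma tube_opens_directed y : directed (tube_opens y).
Proof.
split.
  exists set0; split; first exact: open0.
  by exists setT; [exact: filterT | move=> [a b] [_ []]].
move=> O O' [Oo [N Ny NO]] [O'o [N' N'y N'O']].
exists (O `|` O'); split => //; split; first exact: openU.
exists (N `&` N'); first exact: filterI.
by move=> [u v] [[/= Nu N'u] [Ov|O'v]]; [apply: NO | apply: N'O'].
Qed.

Hypothesis f_cont : sigma_continuous f.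

Lemma sigma_continuous_tube y x : f (y, x) ->
  exists N O, [/\ nbhs y N, nbhs x O & N `*` O `<=` f @^-1` [set true]].
Proof.
move: f_cont; rewrite /sigma_continuous openE => /[apply].
by case=> [[N O]] /= [Ny Ox] NO; exists N, O.
Qed.

Lemma open_transpose y : open [set x | f (y, x)].
Proof.
rewrite openE => x /sigma_continuous_tube[N [O [Ny Ox NO]]].
apply: filterS Ox => x' Ox'; apply: (NO (y, x')); split => //=.
exact: nbhs_singleton Ny.
Qed.

Lemma tube_opens_cover y : [set x | f (y, x)] `<=` \bigcup_(O in tube_opens y) O.
Proof.
move=> x /sigma_continuous_tube[N [O [Ny Ox NO]]].
exists O°; last exact: Ox.
split; first exact: open_interior.
exists N => // -[u v] [/= Nu /interior_subset Ov].
exact: NO.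
Qed.

Lemma scott_continuous_transpose :
  continuous_lattice_OX X -> scott_continuous_to_OX (fun y => [set x | f (y, x)]).
Proof.
move=> CL; split => [|V [_ Vup Vdir]]; first exact: open_transpose.
rewrite openE => y0 Vy0.
pose WB := [set W | open W /\ way_below W [set x | f (y0, x)]].
have [WBdir WBcover] : directed WB /\ _ := CL _ (open_transpose y0).
have /(Vdir WB (fun _ => @proj1 _ _) WBdir)[U [_ Uwb] VU] : V (\bigcup_(W in WB) W).
  by rewrite -WBcover.
have [O [_ [N Ny0 NO]] UO] :=
  Uwb (tube_opens y0) (fun _ => @proj1 _ _) (tube_opens_directed y0) (@tube_opens_cover y0).
apply: filterS Ny0 => y Ny; apply: Vup VU (open_transpose y) _ => x /UO Ox.
exact: (NO (y, x)).
Qed.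

End Transpose.

Lemma continuous_lattice_exponential (X : topologicalType) (e : set X -> X -> bool) :
  continuous_lattice_OX X -> ev_continuous e ->
  (forall U x, open U -> e U x = `[< U x >]) -> is_exponential_Sigma e.
Proof.
move=> CL e_cont eE; split => // Y f f_cont.
exists (fun y => [set x | f (y, x)]); split.
- exact: scott_continuous_transpose.
- by move=> y x; rewrite eE ?asboolb //; exact: open_transpose.
- move=> h [h_open _] he; apply/funext => y; apply/funext => x.
  by rewrite /= -he eE // asboolE.
Qed.

Section FreeFrame.
Variable G : Type.

Definition SigmaG_basic (F : list G) : set (G -> bool) :=
  [set h | forall g, Stdlib.Lists.List.In g F -> h g = true].

Lemma SigmaG_basic_open F : SigmaG_open (SigmaG_basic F).
Proof. by move=> h hF; exists F. Qed.

Lemma SigmaG_open_cover (m : set (G -> bool)) : SigmaG_open m ->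
  m = \bigcup_(b in SigmaG_basic @` [set F | SigmaG_basic F `<=` m]) b.
Proof.
move=> mo; apply/seteqP; split => [h /mo[F [hF Fm]] | h [_ [F Fm <-] /Fm //]].
by exists (SigmaG_basic F) => //; exists F.
Qed.

Definition SigmaG_above (F : list G) : set (set (G -> bool)) :=
  [set m | SigmaG_open m /\ SigmaG_basic F `<=` m].

(* Compactness of [SigmaG_basic F]: it is the upset of the indicator of F. *)
Lemma scott_open_SigmaG_above F : scott_open (@SigmaG_open G) (SigmaG_above F).
Proof.
split => [m [] // | m m' [_ Fm] m'o mm' | D Dop _ [_ FD]].
  by split => //; exact: subset_trans Fm mm'.
have [d Dd dF] : (\bigcup_(d in D) d) (fun g => `[< Stdlib.Lists.List.In g F >]).
  by apply: FD => g gF; exact: asboolT.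
exists d => //; split; first exact: Dop.
have [F' [F'F F'd]] := Dop d Dd _ dF.
by move=> h hF; apply: F'd => g /F'F /asboolW /hF.
Qed.

End FreeFrame.

Arguments SigmaG_basic_open {G} F.

Section Presentation.
Variables (G : Type) (X : topologicalType) (q : set (G -> bool) -> set X).
Hypothesis q_hom : frame_hom q.

Lemma frame_hom_mono a b : SigmaG_open a -> SigmaG_open b -> a `<=` b ->
  q a `<=` q b.
Proof.
have [_ _ qI _] := q_hom.
by move=> ao bo ab; rewrite -(setIidl ab) qI // => x [].
Qed.

Lemma frame_hom_cover m x : SigmaG_open m -> q m x ->
  exists2 F, SigmaG_basic F `<=` m & q (SigmaG_basic F) x.
Proof.
have [_ _ _ qJ] := q_hom.
move=> mo; rewrite {1}(SigmaG_open_cover mo) qJ; last first.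
  by move=> _ [F _ <-]; exact: SigmaG_basic_open.
by case=> _ [F Fm <-] Fx; exists F.
Qed.

Variable s : set X -> set (G -> bool).
Hypotheses (s_open : forall U, open U -> SigmaG_open (s U))
  (qs : forall U, open U -> q (s U) = U)
  (s_scott : scott_continuous_OX_SigmaG s).

Lemma section_basic_cover W x : open W -> W x ->
  exists2 F, SigmaG_basic F `<=` s W & q (SigmaG_basic F) x.
Proof. by move=> Wo Wx; apply: frame_hom_cover (s_open Wo) _; rewrite qs. Qed.

Lemma q_basic_way_below W F : open W -> SigmaG_basic F `<=` s W ->
  way_below (q (SigmaG_basic F)) W.
Proof.
move=> Wo FW D Dop Ddir WD.
have [_ Vup Vdir] := s_scott (scott_open_SigmaG_above F).
have VW : open W /\ SigmaG_above F (s W) by split => //; split => //; exact: s_open.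
have /(Vdir D Dop Ddir)[d Dd [d_open [_ Fd]]] := Vup _ _ VW (bigcup_open Dop) WD.
exists d => //; rewrite -(qs d_open).
exact: frame_hom_mono (SigmaG_basic_open F) (s_open d_open) Fd.
Qed.

Lemma section_continuous_lattice : continuous_lattice_OX X.
Proof.
apply: continuous_lattice_OX_of_cover => W x Wo /(section_basic_cover Wo)[F FW Fx].
exists (q (SigmaG_basic F)) => //; split; last exact: q_basic_way_below.
by have [q_open _ _ _] := q_hom; exact: q_open (SigmaG_basic_open F).
Qed.

Lemma evt_section U x : open U -> evt q (s U) x = `[< U x >].
Proof. by move=> Uo; rewrite /evt qs. Qed.

Lemma section_ev_continuous : ev_continuous (fun U x => evt q (s U) x).
Proof.
move=> U x Uo; rewrite evt_section // => /asboolW /(section_basic_cover Uo)[F FU Fx].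
exists [set U' | open U' /\ SigmaG_above F (s U')], (q (SigmaG_basic F)); split => //.
- exact: s_scott (scott_open_SigmaG_above F).
- by split => //; split => //; exact: s_open.
- by have [q_open _ _ _] := q_hom; exact: q_open (SigmaG_basic_open F).
- move=> U' x' [U'o [_ FU']] Fx'; apply/asboolT.
  exact: frame_hom_mono (SigmaG_basic_open F) (s_open U'o) FU' _ Fx'.
Qed.

End Presentation.

Theorem proposition3p5 (G : Type) (R : set (set (G -> bool) * set (G -> bool)))
  (X : topologicalType) (q : set (G -> bool) -> set X)
  (s : set X -> set (G -> bool)) :
  presentation R q ->
  (forall U, open U -> SigmaG_open (s U)) ->
  (forall U, open U -> q (s U) = U) ->
  scott_continuous_OX_SigmaG s ->
  is_exponential_Sigma (fun U x => evt q (s U) x) /\ continuous_lattice_OX X.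
Proof.
case=> _ q_hom _ _ s_open qs s_scott.
have CL := section_continuous_lattice q_hom s_open qs s_scott.
split => //; apply: continuous_lattice_exponential => //.
- exact: section_ev_continuous.
- exact: evt_section.
Qed.
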